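(* Let $m\ge 1$ and $n\geq 3m+1$ be integers, and let $p,q$ be real numbers with $0<p\leq q$ and $0<p+q<1$. Then the minimum discrepancy of $C_{n,m}$ satisfies $$\delta(C_{n,m})\leq\min\{m^2,\ (1+\gamma)m\},$$ where $\gamma=\gamma_{p,q}=\log_{\frac{q}{1-p}}\left(\frac{p}{1-q}\right)$.
   Context: For integers $n\geq 2$, $N=\binom{n}{2}$ and $1\leq m\leq n$, the community code $C_{n,m}\subseteq\mathbb{F}_2^N$ consists of exactly those binary vectors of length $N$ that are the upper-triangular (off-diagonal) part of the adjacency matrix of a simple undirected graph on the labeled vertex set $\{1,\ldots,n\}$ which is a disjoint union of cliques, each clique having at least $m$ vertices. For $\mathbf{x},\mathbf{y}\in\mathbb{F}_2^N$ and $a,b\in\mathbb{F}_2$ let $d_{ab}(\mathbf{y},\mathbf{x})=|\{i: y_i=a,\ x_i=b\}|$. The discrepancy is $\delta(\mathbf{y},\mathbf{x})=\gamma\, d_{10}(\mathbf{y},\mathbf{x})+d_{01}(\mathbf{y},\mathbf{x})$ with $\gamma=\log_{\frac{q}{1-p}}\left(\frac{p}{1-q}\right)$. The minimum discrepancy $\delta(C)$ of a code $C$ is the minimum of $\delta(\mathbf{y},\mathbf{x})$ over all ordered pairs of distinct codewords $\mathbf{x},\mathbf{y}\in C$. *)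

From Stdlib Require Import Reals.
From mathcomp Require Import all_boot.

Set Implicit Arguments.
Unset Strict Implicit.
Unset Printing Implicit Defensive.

Local Open Scope R_scope.

(* Coordinate set of F_2^N, N = binom(n,2): unordered pairs {i,j}, i<j, of
   vertices in {0,...,n-1} (upper-triangular off-diagonal entries). *)
Definition coord (n : nat) : finType := {p : 'I_n * 'I_n | (p.1 < p.2)%N}.

Definition word (n : nat) : finType := {ffun coord n -> bool}.

(* Community code C_{n,m}: x is the upper-triangular part of the adjacency
   matrix of a disjoint union of cliques, each with at least m vertices. *)
Definition community_code (n m : nat) : pred (word n) :=
  fun x => [exists f : {ffun 'I_n -> 'I_n},
     [forall i : 'I_n, (m <= #|[set k : 'I_n | f k == f i]|)%N] &&
     [forall c : coord n, x c == (f (val c).1 == f (val c).2)]].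

Arguments community_code : clear implicits.

Definition dab (n : nat) (y x : word n) (a b : bool) : nat :=
  #|[set i : coord n | (y i == a) && (x i == b)]|.

Definition gamma (p q : R) : R := (ln (p / (1 - q)) / ln (q / (1 - p))).

Definition discrepancy (g : R) (n : nat) (y x : word n) : R :=
  g * INR (dab y x true false) + INR (dab y x false true).

(* Minimum discrepancy of a code C: the minimum of delta(y,x) over all ordered
   pairs (x,y) of distinct codewords.  (Convention: 0 if C has fewer than two
   codewords; this case does not arise in the theorem.) *)
Definition min_discrepancy (g : R) (n : nat) (C : pred (word n)) : R :=
  let ds := [seq discrepancy g xy.2 xy.1
            | xy <- enum [pred xy : word n * word n |
                           C xy.1 && C xy.2 && (xy.1 != xy.2)]] in
  match ds with
  | [::] => 0
  | d :: ds' => foldr Rmin d ds'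
  end.

From Stdlib Require Import Reals Lra.
From mathcomp Require Import all_boot zify.

Set Implicit Arguments.
Unset Strict Implicit.
Unset Printing Implicit Defensive.

(* The bound comes from two explicit pairs of codewords on the vertices
   0, ..., n-1.  First, x has the cliques [0, 2m) and [2m, n), and y splits
   the first one into two m-cliques: y refines x, so d_10 = 0 and d_01 is the
   m^2 edges between the halves.  Second, x has the cliques [0, m+1),
   [m+1, 2m+1), [2m+1, n), and y moves vertex m into the second clique: m
   edges are lost and m are gained, giving (1 + gamma) m, where gamma > 0
   since p/(1-q) and q/(1-p) both lie in (0, 1).  The condition n >= 3m+1
   keeps every clique of size at least m. *)

Definition clique_word (T : eqType) n (f : 'I_n -> T) : word n :=
  [ffun c : coord n => f (val c).1 == f (val c).2].

Lemma clique_wordE (T : eqType) n (f : 'I_n -> T) (c : coord n) :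
  clique_word f c = (f (val c).1 == f (val c).2).
Proof. by rewrite ffunE. Qed.

(* Labels are replaced by their rank among the distinct labels, which is < n. *)
Lemma clique_word_code (T : eqType) n m (f : 'I_n -> T) :
  (forall i, m <= #|[set k | f k == f i]|) -> community_code n m (clique_word f).
Proof.
move=> big_classes; set s := undup (map f (enum 'I_n)).
have f_in_s i : f i \in s by rewrite mem_undup map_f ?mem_enum.
have rank_lt i : index (f i) s < n.
  rewrite -(size_enum_ord n) -(size_map f); apply: leq_trans (size_undup _).
  by rewrite index_mem.
have rank_eq i j : (Ordinal (rank_lt i) == Ordinal (rank_lt j)) = (f i == f j).
  apply/eqP/eqP => [/(congr1 val) /= /(index_inj (f i)) -> // | fij].
  by apply: val_inj; rewrite /= fij.
apply/existsP; exists [ffun i => Ordinal (rank_lt i)]; apply/andP; split.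
  apply/forallP => i; apply: leq_trans (big_classes i) _.
  by apply: subset_leq_card; apply/subsetP => k; rewrite !inE !ffunE rank_eq.
by apply/forallP => c; rewrite !ffunE rank_eq.
Qed.

Lemma clique_word_neq (T : eqType) n (f g : 'I_n -> T) (i j : 'I_n) :
  i < j -> f i = f j -> g i <> g j -> clique_word f != clique_word g.
Proof.
move=> lt_ij fij gij; pose c : coord n := exist _ (i, j) lt_ij.
apply/eqP => /(congr1 (fun w : word n => w c)).
by rewrite !ffunE /= fij eqxx => /esym /eqP.
Qed.

Lemma card_interval_le n (A : {pred 'I_n}) a l :
  {in A, forall k : 'I_n, a <= k < a + l} -> #|A| <= l.
Proof.
move=> A_sub; rewrite cardE -(size_map val) -(size_iota a l).
apply: uniq_leq_size; first by rewrite map_inj_uniq ?enum_uniq //; apply: val_inj.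
by move=> v /mapP [k]; rewrite mem_enum => /A_sub + ->; rewrite mem_iota.
Qed.

Lemma card_interval_ge n (A : {pred 'I_n}) a l : a + l <= n ->
  (forall k : 'I_n, a <= k < a + l -> k \in A) -> l <= #|A|.
Proof.
move=> fits A_sup; pose g (j : 'I_l) : 'I_n := widen_ord fits (rshift a j).
have g_inj : injective g by move=> j1 j2 /(congr1 val) /= /addnI /val_inj.
rewrite -[l]card_ord -cardsT -(card_imset _ g_inj); apply: subset_leq_card.
apply/subsetP => k /imsetP [j _ ->]; apply: A_sup.
by rewrite /g /= leq_addr ltn_add2l ltn_ord.
Qed.

Lemma dab_refines n (y x : word n) : (forall c, y c -> x c) -> dab y x true false = 0.
Proof.
move=> y_x; apply/eqP; rewrite cards_eq0; apply/eqP/setP => c; rewrite !inE.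
by case yc: (y c); rewrite //= y_x.
Qed.

Lemma dab_le_mul n (y x : word n) a b i1 l1 i2 l2 :
  (forall c : coord n, y c = a -> x c = b ->
     i1 <= (val c).1 < i1 + l1 /\ i2 <= (val c).2 < i2 + l2) ->
  dab y x a b <= l1 * l2.
Proof.
move=> located; pose I1 := [set k : 'I_n | i1 <= k < i1 + l1].
pose I2 := [set k : 'I_n | i2 <= k < i2 + l2].
apply: (@leq_trans #|setX I1 I2|).
  rewrite /dab -(card_imset _ val_inj); apply: subset_leq_card.
  apply/subsetP => k /imsetP [c]; rewrite inE => /andP [/eqP yc /eqP xc] ->.
  by have [? ?] := located c yc xc; rewrite !inE; apply/andP.
rewrite cardsX; apply: leq_mul.
  by apply: (card_interval_le (a := i1)) => k; rewrite inE.
by apply: (card_interval_le (a := i2)) => k; rewrite inE.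
Qed.

(* The cliques [0, t1), [t1, t2) and [t2, n) get the labels 0, 1 and 2. *)
Definition blocks (t1 t2 i : nat) : nat := (t1 <= i) + (t2 <= i).

Definition block_word n t1 t2 : word n := clique_word (fun i : 'I_n => blocks t1 t2 i).

Lemma block_wordE n t1 t2 (c : coord n) :
  block_word n t1 t2 c = (blocks t1 t2 (val c).1 == blocks t1 t2 (val c).2).
Proof. exact: clique_wordE. Qed.

Lemma block_word_code n m t1 t2 : m <= t1 -> t1 + m <= t2 -> t2 + m <= n \/ t2 = n ->
  community_code n m (block_word n t1 t2).
Proof.
move=> first_big second_big third_big; apply: clique_word_code => i.
have lt_in := ltn_ord i.
have [a [fits same_block]] : exists a, a + m <= n /\
    forall k, a <= k < a + m -> blocks t1 t2 k = blocks t1 t2 i.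
  rewrite /blocks; case: (ltnP i t1) => ?; last case: (ltnP i t2) => ?.
  - by exists 0; split => [|k]; lia.
  - by exists t1; split => [|k]; lia.
  - by exists t2; split => [|k]; lia.
by apply: (card_interval_ge fits) => k /same_block; rewrite inE => ->.
Qed.

Local Open Scope R_scope.

Lemma split_clique_discrepancy g n m :
  discrepancy g (block_word n m (2 * m)) (block_word n (2 * m) n) <= INR (m ^ 2).
Proof.
set y := block_word n m (2 * m); set x := block_word n (2 * m) n.
have no_new_edge : dab y x true false = 0%N.
  apply: dab_refines => -[[u v] /= lt_uv]; rewrite !block_wordE /= /blocks => /eqP same.
  by apply/eqP; have := ltn_ord v; lia.
have lost_edges : (dab y x false true <= m * m)%N.
  apply: (dab_le_mul (i1 := 0) (i2 := m)) => -[[u v] /= lt_uv].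
  rewrite !block_wordE /= /blocks => /negbT /eqP diff /eqP same.
  by have := ltn_ord v; lia.
rewrite /discrepancy no_new_edge Rmult_0_r Rplus_0_l -mulnn.
exact/le_INR/leP.
Qed.

Lemma move_vertex_discrepancy g n m : 0 <= g ->
  discrepancy g (block_word n m (2 * m).+1) (block_word n m.+1 (2 * m).+1)
    <= (1 + g) * INR m.
Proof.
move=> g_ge0; set y := block_word n m (2 * m).+1; set x := block_word n m.+1 (2 * m).+1.
have new_edges : (dab y x true false <= 1 * m)%N.
  apply: (dab_le_mul (i1 := m) (i2 := m.+1)) => -[[u v] /= lt_uv].
  by rewrite !block_wordE /= /blocks => /eqP same /negbT /eqP diff; lia.
have lost_edges : (dab y x false true <= m * 1)%N.
  apply: (dab_le_mul (i1 := 0) (i2 := m)) => -[[u v] /= lt_uv].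
  by rewrite !block_wordE /= /blocks => /negbT /eqP diff /eqP same; lia.
rewrite mul1n in new_edges; rewrite muln1 in lost_edges.
move/leP/le_INR: new_edges; move/leP/le_INR: lost_edges.
rewrite /discrepancy; nra.
Qed.

Lemma foldr_Rmin_le (T : eqType) (F : T -> R) a s t :
  t \in a :: s -> foldr Rmin (F a) (map F s) <= F t.
Proof.
elim: s a => [|b s IHs] a; first by rewrite mem_seq1 => /eqP ->; apply: Rle_refl.
rewrite /= !in_cons orbCA => /orP [/eqP -> | t_as]; first exact: Rmin_l.
exact: Rle_trans (Rmin_r _ _) (IHs a t_as).
Qed.

Lemma min_discrepancy_le g n (C : pred (word n)) x y :
  C x -> C y -> x != y -> min_discrepancy g C <= discrepancy g y x.
Proof.
move=> Cx Cy neq_xy; rewrite /min_discrepancy.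
have : (x, y) \in enum [pred xy : word n * word n | C xy.1 && C xy.2 && (xy.1 != xy.2)].
  by rewrite mem_enum inE /= Cx Cy neq_xy.
by case: (enum _) => [|a s] //; apply: (foldr_Rmin_le (fun xy => discrepancy g xy.2 xy.1)).
Qed.

Lemma ln_div_lt0 a b : 0 < a -> a < b -> ln (a / b) < 0.
Proof.
move=> a_gt0 lt_ab; have b_gt0 : 0 < b by lra.
have inv_b_gt0 : 0 < / b by apply: Rinv_0_lt_compat.
rewrite /Rdiv ln_mult // ln_Rinv //.
by have := ln_increasing a b a_gt0 lt_ab; lra.
Qed.

Lemma gamma_pos p q : 0 < p -> 0 < q -> p + q < 1 -> 0 < gamma p q.
Proof. by move=> *; apply: Rdiv_neg_neg; apply: ln_div_lt0; lra. Qed.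

Theorem theorem3 (m n : nat) (p q : R) :
  (1 <= m)%N -> (3 * m + 1 <= n)%N ->
  0 < p -> p <= q -> 0 < p + q -> p + q < 1 ->
  min_discrepancy (gamma p q) (community_code n m)
    <= Rmin (INR (m ^ 2)%N) ((1 + gamma p q) * INR m).
Proof.
move=> m_gt0 n_big p_gt0 le_pq _ pq_lt1.
have gamma_ge0 : 0 <= gamma p q by apply: Rlt_le; apply: gamma_pos; lra.
have lt_0n : (0 < n)%N by lia.
have lt_mn : (m < n)%N by lia.
(* In both pairs below, vertices 0 and m are adjacent in x but not in y. *)
have lt_0m : (Ordinal lt_0n < Ordinal lt_mn)%N by [].
apply: Rmin_glb.
- apply: Rle_trans (split_clique_discrepancy _ n m).
  apply: min_discrepancy_le; try (apply: block_word_code; lia).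
  by apply: (clique_word_neq lt_0m) => /=; rewrite /blocks; lia.
- apply: Rle_trans (move_vertex_discrepancy n m gamma_ge0).
  apply: min_discrepancy_le; try (apply: block_word_code; lia).
  by apply: (clique_word_neq lt_0m) => /=; rewrite /blocks; lia.
Qed.
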